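(* Let $N$ be a positive integer, $L>0$, and $\zeta=(\zeta_0,\dots,\zeta_{N+2})\in\mathbb{R}^{N+3}$ with $\zeta_0>\zeta_1>\dots>\zeta_{N+1}>\zeta_{N+2}=0$. With $f_k$ and $W^\zeta$ as defined in the context and $W^{\zeta,*}=\min_{y\in\mathbb{R}^{N+1}}W^\zeta(y)$, if $\bar y=(\bar y_0,\dots,\bar y_N)\in\mathbb{R}^{N+1}$ satisfies $\bar y_k\geq 0$ for some $k\in\{0,\dots,N\}$, then \[ W^\zeta(\bar y)-W^{\zeta,*}\geq f_k. \]
   Context: Let $e_0,\dots,e_N$ denote the standard unit vectors of $\mathbb{R}^{N+1}$ (zero-based indexing). Define for $i=0,\dots,N+1$: $x_i=-\sum_{j=0}^{i-1}\frac{\zeta_j-\zeta_{i+1}}{\sqrt{\zeta_j-\zeta_{j+1}}}e_j\in\mathbb{R}^{N+1}$; $g_i=L\sqrt{\zeta_i-\zeta_{i+1}}\,e_i$ for $i=0,\dots,N$ and $g_{N+1}=0$; $f_i=\frac L2(\zeta_i+\zeta_{i+1})$ for $i=0,\dots,N$ and $f_{N+1}=0$. For $y\in\mathbb{R}^{N+1}$, $\nu\in\mathbb{R}^{N+1}$, $\alpha=(\alpha_0,\dots,\alpha_{N+1})\in\mathbb{R}^{N+2}$ let $w^\zeta(y,\nu,\alpha)=\frac L2\|y+\nu-\sum_{i=0}^{N+1}\alpha_i(x_i-\frac1Lg_i)\|^2+\sum_{i=0}^{N+1}\alpha_i(f_i-\frac1{2L}\|g_i\|^2)$, and $W^\zeta(y)=\min\{w^\zeta(y,\nu,\alpha):\nu\in\mathbb{R}^{N+1}_+,\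 \alpha\in\Delta_{N+2}\}$, where $\mathbb{R}^{N+1}_+$ is the nonnegative orthant and $\Delta_{N+2}=\{\alpha\in\mathbb{R}^{N+2}:\alpha_i\geq0,\ \sum_i\alpha_i=1\}$. *)

From HB Require Import structures.
From mathcomp Require Import all_boot all_order all_algebra.
From mathcomp Require Import classical_sets reals.
Set Implicit Arguments. Unset Strict Implicit. Unset Printing Implicit Defensive.
Import Order.TTheory GRing.Theory Num.Theory.
Local Open Scope ring_scope.
Local Open Scope classical_set_scope.

Section Defs.
Variables (R : realType) (N : nat) (L : R) (zeta : nat -> R).

(* j-th coordinate (0 <= j <= N) of x_i, i = 0..N+1 *)
Definition xvec (i j : nat) : R :=
  if (j < i)%N then - ((zeta j - zeta i.+1) / Num.sqrt (zeta j - zeta j.+1)) else 0.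

(* j-th coordinate of g_i; g_{N+1} = 0 *)
Definition gvec (i j : nat) : R :=
  if (i <= N)%N && (j == i) then L * Num.sqrt (zeta i - zeta i.+1) else 0.

Definition fval (i : nat) : R :=
  if (i <= N)%N then L / 2 * (zeta i + zeta i.+1) else 0.

Definition gnorm2 (i : nat) : R := \sum_(j < N.+1) gvec i j ^+ 2.

Definition wz (y nu : 'I_N.+1 -> R) (alpha : 'I_N.+2 -> R) : R :=
  L / 2 * \sum_(j < N.+1)
      (y j + nu j - \sum_(i < N.+2) alpha i * (xvec i j - gvec i j / L)) ^+ 2
  + \sum_(i < N.+2) alpha i * (fval i - gnorm2 i / (2 * L)).

Definition feasible (nu : 'I_N.+1 -> R) (alpha : 'I_N.+2 -> R) : Prop :=
  (forall j, 0 <= nu j) /\ (forall i, 0 <= alpha i) /\ \sum_(i < N.+2) alpha i = 1.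

(* W^zeta(y): the minimum (taken as infimum) of w over nu >= 0, alpha in the simplex *)
Definition Wz (y : 'I_N.+1 -> R) : R :=
  inf [set r | exists nu alpha, feasible nu alpha /\ r = wz y nu alpha].

Definition Wzstar : R := inf (range Wz).

End Defs.

From HB Require Import structures.
From mathcomp Require Import all_boot all_order all_algebra.
From mathcomp Require Import classical_sets reals.
From mathcomp Require Import ring lra.
Set Implicit Arguments. Unset Strict Implicit. Unset Printing Implicit Defensive.
Import Order.TTheory GRing.Theory Num.Theory.
Local Open Scope ring_scope.
Local Open Scope classical_set_scope.

(** Since [f_i - |g_i|^2/(2L) = L zeta_(i+1) >= 0], every value of [w] is
    nonnegative, and [y = x_(N+1)], [nu = 0], [alpha = e_(N+1)] gives [w = 0];
    hence [W^* = 0].  For the lower bound at [ybar], the [k]-th coordinate of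
    the residual [y + nu - sum_i alpha_i (x_i - g_i/L)] equals
    [ybar_k + nu_k + A / sqrt(zeta_k - zeta_(k+1))] with [A >= 0] the weighted
    gap [sum_(i >= k) alpha_i (zeta_k - zeta_(i+1))], while monotonicity of
    [zeta] bounds the linear part of [w] below by [L (zeta_k - A)].  The two
    contributions add up to at least [f_k] because
    [A^2/d - 2A + d = (A - d)^2/d >= 0]. *)

Lemma ler_sqr_div (R : realFieldType) (a d : R) :
  0 < d -> 2 * a - d <= a ^+ 2 / d.
Proof.
move=> d_gt0; rewrite -subr_ge0.
have -> : a ^+ 2 / d - (2 * a - d) = (a - d) ^+ 2 / d.
  by field; rewrite gt_eqF.
by rewrite divr_ge0 ?sqr_ge0 ?ltW.
Qed.

Section Wzeta.
Variables (R : realType) (N : nat) (L : R) (zeta : nat -> R).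
Hypothesis L_gt0 : 0 < L.
Hypothesis zeta_decr : forall i : nat, (i <= N.+1)%N -> zeta i.+1 < zeta i.
Hypothesis zeta_last : zeta N.+2 = 0.

Lemma zeta_antitone m n : (m <= n)%N -> (n <= N.+2)%N -> zeta n <= zeta m.
Proof.
elim: n => [|n IHn] le_mn le_nN; first by rewrite leqn0 in le_mn; rewrite (eqP le_mn).
case: (ltngtP m n.+1) le_mn => // [lt_mn _|-> _]; last by [].
by apply: le_trans (IHn lt_mn (ltnW le_nN)); apply/ltW/zeta_decr.
Qed.

Lemma zeta_gap_gt0 j : (j <= N)%N -> 0 < zeta j - zeta j.+1.
Proof. by move=> le_jN; rewrite subr_gt0 zeta_decr // (leq_trans le_jN). Qed.

Lemma zeta_ge0 i : (i <= N.+2)%N -> 0 <= zeta i.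
Proof. by move=> le_iN2; rewrite -zeta_last zeta_antitone. Qed.

Lemma xvec_sub_gvec i j : (j <= N)%N ->
  xvec zeta i j - gvec N L zeta i j / L =
  if (j <= i)%N then - ((zeta j - zeta i.+1) / Num.sqrt (zeta j - zeta j.+1))
  else 0.
Proof.
move=> le_jN; rewrite /xvec /gvec.
case: (ltngtP j i) => [|_|<-]; rewrite ?andbF ?mul0r ?subr0 //.
rewrite le_jN /=.
have s_gt0 : 0 < Num.sqrt (zeta j - zeta j.+1) by rewrite sqrtr_gt0 zeta_gap_gt0.
rewrite -{2}(sqr_sqrtr (ltW (zeta_gap_gt0 le_jN))) expr2.
by field; rewrite !gt_eqF.
Qed.

Lemma fval_sub_gnorm2 i : (i <= N.+1)%N ->
  fval N L zeta i - gnorm2 N L zeta i / (2 * L) = L * zeta i.+1.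
Proof.
move=> le_iN1; rewrite /fval /gnorm2.
case: (leqP i N) => [le_iN|lt_Ni]; last first.
  have -> : i = N.+1 by apply/eqP; rewrite eqn_leq le_iN1 lt_Ni.
  by rewrite zeta_last mulr0 big1 ?mul0r ?subr0 // => j _; rewrite /gvec ltnn expr0n.
rewrite (bigD1 (inord i)) //= big1 => [|j ne_ji]; last first.
  rewrite /gvec le_iN /=; case: eqP => [eq_ji|_]; last by rewrite expr0n.
  by move/eqP: ne_ji; case; apply/val_inj; rewrite /= inordK.
rewrite /gvec inordK // le_iN eqxx addr0 exprMn sqr_sqrtr ?ltW ?zeta_gap_gt0 //.
by field; rewrite gt_eqF.
Qed.

Lemma wz_linear_part (alpha : 'I_N.+2 -> R) :
  \sum_(i < N.+2) alpha i * (fval N L zeta i - gnorm2 N L zeta i / (2 * L)) =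
  L * \sum_(i < N.+2) alpha i * zeta i.+1.
Proof.
rewrite mulr_sumr; apply: eq_bigr => i _.
by rewrite fval_sub_gnorm2 1?mulrCA // -ltnS.
Qed.

Definition weighted_gap (k : nat) (alpha : 'I_N.+2 -> R) : R :=
  \sum_(i < N.+2) alpha i * (if (k <= i)%N then zeta k - zeta i.+1 else 0).

Section Feasible.
Variables (nu : 'I_N.+1 -> R) (alpha : 'I_N.+2 -> R).
Hypothesis feas : feasible nu alpha.

Lemma weighted_gap_ge0 k : 0 <= weighted_gap k alpha.
Proof.
case: feas => _ [alpha_ge0 _].
apply: sumr_ge0 => i _; apply: mulr_ge0 => //; case: ifP => // le_ki.
by rewrite subr_ge0 zeta_antitone // ltnW.
Qed.

Lemma weighted_gap_lin (k : 'I_N.+1) :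
  zeta k - weighted_gap k alpha <= \sum_(i < N.+2) alpha i * zeta i.+1.
Proof.
case: feas => _ [alpha_ge0 alpha_sum1].
rewrite lerBlDr -subr_ge0 -[zeta k in X in 0 <= X]mul1r -alpha_sum1 mulr_suml.
rewrite /weighted_gap -big_split -sumrB /=; apply: sumr_ge0 => i _.
rewrite -mulrDr -mulrBr mulr_ge0 //; case: ifP => le_ki.
  by rewrite addrCA subrr addr0 subrr.
rewrite addr0 subr_ge0 zeta_antitone ?ltnNge ?le_ki //.
by rewrite (leq_trans (leq_ord k)) // leqW.
Qed.

Lemma residual_coord (k : 'I_N.+1) :
  \sum_(i < N.+2) alpha i * (xvec zeta i k - gvec N L zeta i k / L) =
  - (weighted_gap k alpha / Num.sqrt (zeta k - zeta k.+1)).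
Proof.
rewrite /weighted_gap mulr_suml -sumrN; apply: eq_bigr => i _.
by rewrite xvec_sub_gvec ?leq_ord //; case: ifP => _; ring.
Qed.

Lemma wz_ge0 (y : 'I_N.+1 -> R) : 0 <= wz L zeta y nu alpha.
Proof.
case: feas => _ [alpha_ge0 _].
rewrite /wz wz_linear_part; apply: addr_ge0; apply: mulr_ge0.
- by rewrite divr_ge0 ?ltW.
- by apply: sumr_ge0 => j _; apply: sqr_ge0.
- exact: ltW.
- by apply: sumr_ge0 => i _; rewrite mulr_ge0 ?zeta_ge0.
Qed.

Lemma fval_le_wz (y : 'I_N.+1 -> R) (k : 'I_N.+1) :
  0 <= y k -> fval N L zeta k <= wz L zeta y nu alpha.
Proof.
move=> yk_ge0; case: (feas) => nu_ge0 _.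
have le_kN : (k <= N)%N := leq_ord k.
set d := zeta k - zeta k.+1; set A := weighted_gap k alpha.
have d_gt0 : 0 < d := zeta_gap_gt0 le_kN.
have s_gt0 : 0 < Num.sqrt d by rewrite sqrtr_gt0.
have As_ge0 : 0 <= A / Num.sqrt d by rewrite divr_ge0 ?weighted_gap_ge0 ?ltW.
have quad : A ^+ 2 / d <=
    \sum_(j < N.+1) (y j + nu j - \sum_(i < N.+2)
                       alpha i * (xvec zeta i j - gvec N L zeta i j / L)) ^+ 2.
  rewrite (bigD1 k) //= residual_coord opprK -/d -/A.
  apply: ler_wpDr; first by apply: sumr_ge0 => j _; apply: sqr_ge0.
  have -> : A ^+ 2 / d = (A / Num.sqrt d) ^+ 2 by rewrite expr_div_n sqr_sqrtr ?ltW.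
  by have := nu_ge0 k; nra.
have L2_ge0 : 0 <= L / 2 by rewrite divr_ge0 ?ltW.
have lin : zeta k - A <= \sum_(i < N.+2) alpha i * zeta i.+1 := weighted_gap_lin k.
rewrite /wz wz_linear_part.
apply: le_trans (lerD (ler_wpM2l L2_ge0 quad) (ler_wpM2l (ltW L_gt0) lin)).
have := ler_wpM2l L2_ge0 (ler_sqr_div A d_gt0).
rewrite /fval le_kN /d; lra.
Qed.

End Feasible.

Definition alpha_last : 'I_N.+2 -> R := fun i => (i == ord_max)%:R.

Lemma feasible_alpha_last : feasible (fun _ : 'I_N.+1 => 0) alpha_last.
Proof.
split=> //; split=> [i|]; first by rewrite ler0n.
by rewrite (bigD1 ord_max) //= big1 ?addr0 /alpha_last ?eqxx // => i /negbTE ->.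
Qed.

Lemma sum_alpha_last (F : 'I_N.+2 -> R) :
  \sum_(i < N.+2) alpha_last i * F i = F ord_max.
Proof.
by rewrite (bigD1 ord_max) //= big1 ?addr0 /alpha_last ?eqxx ?mul1r // => i /negbTE ->;
  rewrite mul0r.
Qed.

Definition x_last : 'I_N.+1 -> R := fun j => xvec zeta N.+1 j.

Lemma wz_x_last :
  wz L zeta x_last (fun _ => 0) alpha_last = 0.
Proof.
rewrite /wz sum_alpha_last fval_sub_gnorm2 // zeta_last mulr0 addr0.
rewrite big1 ?mulr0 // => j _.
by rewrite sum_alpha_last /gvec ltnn mul0r subr0 addr0 subrr expr0n.
Qed.

Lemma Wz_set_nonempty (y : 'I_N.+1 -> R) :
  [set r | exists nu alpha, feasible nu alpha /\ r = wz L zeta y nu alpha] !=set0.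
Proof.
by exists (wz L zeta y (fun _ => 0) alpha_last), (fun _ => 0), alpha_last;
  split=> //; apply: feasible_alpha_last.
Qed.

Lemma Wz_ge0 (y : 'I_N.+1 -> R) : 0 <= Wz L zeta y.
Proof.
apply: lb_le_inf; first exact: Wz_set_nonempty.
by move=> _ [nu [alpha [feas ->]]]; apply: wz_ge0.
Qed.

Lemma Wzstar_le0 : Wzstar N L zeta <= 0.
Proof.
have Wx_le0 : Wz L zeta x_last <= 0.
  rewrite /Wz; apply: ge_inf.
    by exists 0 => _ [nu [alpha [feas ->]]]; apply: wz_ge0.
  by exists (fun _ => 0), alpha_last; rewrite wz_x_last; split=> //;
    apply: feasible_alpha_last.
apply: le_trans Wx_le0; rewrite /Wzstar; apply: ge_inf; last by exists x_last.
by exists 0 => _ [y _ <-]; apply: Wz_ge0.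
Qed.

Lemma fval_le_Wz (y : 'I_N.+1 -> R) (k : 'I_N.+1) :
  0 <= y k -> fval N L zeta k <= Wz L zeta y.
Proof.
move=> yk_ge0; apply: lb_le_inf; first exact: Wz_set_nonempty.
by move=> _ [nu [alpha [feas ->]]]; apply: fval_le_wz.
Qed.

End Wzeta.

Theorem corollary2 (R : realType) (N : nat) (L : R) (zeta : nat -> R) :
  (0 < N)%N -> 0 < L ->
  (forall i : nat, (i <= N.+1)%N -> zeta i.+1 < zeta i) ->
  zeta N.+2 = 0 ->
  forall (ybar : 'I_N.+1 -> R) (k : 'I_N.+1),
    0 <= ybar k ->
    @fval R N L zeta k <= @Wz R N L zeta ybar - @Wzstar R N L zeta.
Proof.
move=> _ L_gt0 zeta_decr zeta_last ybar k ybar_k_ge0.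
by rewrite -[fval _ _ _ _]subr0 lerB ?fval_le_Wz ?Wzstar_le0.
Qed.
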